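(* Let $\mathcal{E}$ be an autonomous monoidal category and $\mathcal{K}$ an autonomous 2-category. Then the full sub-bicategory $\mathcal{Z}^{w\text{-}ps}_l(\mathcal{E},\mathcal{K})\subseteq\mathcal{Z}^w_l(\mathcal{E},\mathcal{K})$ whose objects are the pseudofunctors $Del(\mathcal{E})\to\mathcal{K}$ is autonomous.
   Context: A bicategory (2-category) is autonomous if every 1-cell has a left and a right adjoint; a monoidal category is autonomous if every object has a left and a right dual. A left adjoint of a 1-cell $f:A\to B$ is a 1-cell $u:B\to A$ with 2-cells $\eta:\mathrm{id}_A\Rightarrow u\circ f$, $\varepsilon:f\circ u\Rightarrow\mathrm{id}_B$ satisfying the triangle identities; right adjoints are defined dually. $Del(\mathcal{E})$ is the one-object bicategory with hom-category $\mathcal{E}$ and horizontal composition $\otimes$. $\mathcal{Z}^w_l(\mathcal{E},\mathcal{K})=\mathrm{Lax}_{clx}(Del(\mathcal{E}),\mathcal{K})$ is the bicategory whose objects are lax functors $Del(\mathcal{E})\to\mathcal{K}$, whose 1-cells $\mathcal{F}\to\mathcal{G}$ are colax natural transformations, i.e. pairs $(M,\sigma)$ with $M:\mathcal{F}( * )\to\mathcal{G}( * )$ and $\sigma_X:M\circ\mathcal{F}(X)\Rightarrow\mathcal{G}(X)\circ M$ natural in $X$ satisfying $(\mathcal{G}^2_{Y,X}\circ1_M)\cdot(1\circ\sigma_X)\cdot(\sigma_Y\circ1)=\sigma_{Y\otimes X}\cdot(1_M\circ\mathcal{F}^2_{Y,X})$ and $\sigma_I\cdot(1_M\circ\mathcal{F}^0)=\mathcal{G}^0\circ1_M$,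 and whose 2-cells are modifications (2-cells $f:M\Rightarrow N$ with $(1\circ f)\cdot\sigma_X=\tau_X\cdot(f\circ1)$); 1-cells compose by $(N,\tau)\circ(M,\sigma)=(N\circ M,(\tau\circ1_M)\cdot(1_N\circ\sigma))$. *)

Set Implicit Arguments.
Unset Strict Implicit.

Definition transport2 {A : Type} (P : A -> A -> Type) {x x' y y' : A}
  (e : x = x') (e' : y = y') (p : P x y) : P x' y' :=
  match e in _ = x0 return P x0 y' with
  | eq_refl => match e' in _ = y0 return P x y0 with eq_refl => p end
  end.

Record MonCat := {
  mob :> Type;
  mhom : mob -> mob -> Type;
  mid : forall a, mhom a a;
  mcomp : forall {a b c}, mhom b c -> mhom a b -> mhom a c;
  mcomp_idl : forall a b (f : mhom a b), mcomp (mid b) f = f;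
  mcomp_idr : forall a b (f : mhom a b), mcomp f (mid a) = f;
  mcomp_assoc : forall a b c d (f : mhom a b) (g : mhom b c) (h : mhom c d),
      mcomp h (mcomp g f) = mcomp (mcomp h g) f;
  mten : mob -> mob -> mob;
  mtenm : forall {a b c d}, mhom a b -> mhom c d -> mhom (mten a c) (mten b d);
  mtenm_id : forall a c, mtenm (mid a) (mid c) = mid (mten a c);
  mtenm_comp : forall a b c a' b' c' (f : mhom a b) (g : mhom b c)
      (f' : mhom a' b') (g' : mhom b' c'),
      mtenm (mcomp g f) (mcomp g' f') = mcomp (mtenm g g') (mtenm f f');
  munit : mob;
  massoc : forall a b c, mhom (mten (mten a b) c) (mten a (mten b c));
  massoc_inv : forall a b c, mhom (mten a (mten b c)) (mten (mten a b) c);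
  massoc_iso1 : forall a b c, mcomp (massoc_inv a b c) (massoc a b c) = mid _;
  massoc_iso2 : forall a b c, mcomp (massoc a b c) (massoc_inv a b c) = mid _;
  massoc_nat : forall a a' b b' c c' (f : mhom a a') (g : mhom b b') (h : mhom c c'),
      mcomp (massoc a' b' c') (mtenm (mtenm f g) h)
      = mcomp (mtenm f (mtenm g h)) (massoc a b c);
  mlunit : forall a, mhom (mten munit a) a;
  mlunit_inv : forall a, mhom a (mten munit a);
  mlunit_iso1 : forall a, mcomp (mlunit_inv a) (mlunit a) = mid _;
  mlunit_iso2 : forall a, mcomp (mlunit a) (mlunit_inv a) = mid _;
  mlunit_nat : forall a b (f : mhom a b),
      mcomp (mlunit b) (mtenm (mid munit) f) = mcomp f (mlunit a);
  mrunit : forall a, mhom (mten a munit) a;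
  mrunit_inv : forall a, mhom a (mten a munit);
  mrunit_iso1 : forall a, mcomp (mrunit_inv a) (mrunit a) = mid _;
  mrunit_iso2 : forall a, mcomp (mrunit a) (mrunit_inv a) = mid _;
  mrunit_nat : forall a b (f : mhom a b),
      mcomp (mrunit b) (mtenm f (mid munit)) = mcomp f (mrunit a);
  mpentagon : forall a b c d,
      mcomp (massoc a b (mten c d)) (massoc (mten a b) c d)
      = mcomp (mtenm (mid a) (massoc b c d))
          (mcomp (massoc a (mten b c) d) (mtenm (massoc a b c) (mid d)));
  mtriangle : forall a b,
      mcomp (mtenm (mid a) (mlunit b)) (massoc a munit b)
      = mtenm (mrunit a) (mid b)
}.
Arguments mhom {m}.
Arguments mid {m}.
Arguments mcomp {m a b c}.
Arguments mten {m}.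
Arguments mtenm {m a b c d}.
Arguments munit {m}.
Arguments massoc {m}.
Arguments massoc_inv {m}.
Arguments mlunit {m}.
Arguments mlunit_inv {m}.
Arguments mrunit {m}.
Arguments mrunit_inv {m}.

(* L is a left dual of R: ev : L (x) R -> I, coev : I -> R (x) L,
   with the two snake (triangle) identities. *)
Definition is_dual_pair {E : MonCat} (L R : E) : Prop :=
  exists (ev : mhom (mten L R) munit) (coev : mhom munit (mten R L)),
    mcomp (mlunit L) (mcomp (mtenm ev (mid L))
      (mcomp (massoc_inv L R L) (mcomp (mtenm (mid L) coev) (mrunit_inv L))))
      = mid L
    /\
    mcomp (mrunit R) (mcomp (mtenm (mid R) ev)
      (mcomp (massoc R L R) (mcomp (mtenm coev (mid R)) (mlunit_inv R))))
      = mid R.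

Definition mon_autonomous (E : MonCat) : Prop :=
  forall X : E, (exists Y : E, is_dual_pair Y X) /\ (exists Y : E, is_dual_pair X Y).

(* Strict 2-categories.  Laws for 2-cells whose boundaries only agree up
   to the strict 1-cell laws are stated with transport2.               *)
Record TwoCat := {
  tob :> Type;
  c1 : tob -> tob -> Type;
  id1 : forall a, c1 a a;
  comp1 : forall {a b c}, c1 b c -> c1 a b -> c1 a c;
  comp1_idl : forall a b (f : c1 a b), comp1 (id1 b) f = f;
  comp1_idr : forall a b (f : c1 a b), comp1 f (id1 a) = f;
  comp1_assoc : forall a b c d (f : c1 a b) (g : c1 b c) (h : c1 c d),
      comp1 h (comp1 g f) = comp1 (comp1 h g) f;
  c2 : forall {a b}, c1 a b -> c1 a b -> Type;
  id2 : forall a b (f : c1 a b), c2 f f;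
  vcomp : forall {a b} {f g h : c1 a b}, c2 g h -> c2 f g -> c2 f h;
  vcomp_idl : forall a b (f g : c1 a b) (x : c2 f g), vcomp (id2 g) x = x;
  vcomp_idr : forall a b (f g : c1 a b) (x : c2 f g), vcomp x (id2 f) = x;
  vcomp_assoc : forall a b (f g h k : c1 a b) (x : c2 f g) (y : c2 g h) (z : c2 h k),
      vcomp z (vcomp y x) = vcomp (vcomp z y) x;
  hcomp : forall {a b c} {f f' : c1 a b} {g g' : c1 b c},
      c2 g g' -> c2 f f' -> c2 (comp1 g f) (comp1 g' f');
  hcomp_id : forall a b c (f : c1 a b) (g : c1 b c),
      hcomp (id2 g) (id2 f) = id2 (comp1 g f);
  interchange : forall a b c (f f' f'' : c1 a b) (g g' g'' : c1 b c)
      (b1 : c2 g g') (b2 : c2 g' g'') (a1 : c2 f f') (a2 : c2 f' f''),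
      hcomp (vcomp b2 b1) (vcomp a2 a1) = vcomp (hcomp b2 a2) (hcomp b1 a1);
  hcomp_idl : forall a b (f f' : c1 a b) (x : c2 f f'),
      @transport2 _ (@c2 a b) _ _ _ _ (comp1_idl f) (comp1_idl f') (hcomp (id2 (id1 b)) x) = x;
  hcomp_idr : forall a b (f f' : c1 a b) (x : c2 f f'),
      @transport2 _ (@c2 a b) _ _ _ _ (comp1_idr f) (comp1_idr f') (hcomp x (id2 (id1 a))) = x;
  hcomp_assoc : forall a b c d (f f' : c1 a b) (g g' : c1 b c) (h h' : c1 c d)
      (x : c2 f f') (y : c2 g g') (z : c2 h h'),
      @transport2 _ (@c2 a d) _ _ _ _ (comp1_assoc f g h) (comp1_assoc f' g' h') (hcomp z (hcomp y x))
      = hcomp (hcomp z y) x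
}.
Arguments c1 {t}.
Arguments id1 {t}.
Arguments comp1 {t a b c}.
Arguments comp1_idl {t a b}.
Arguments comp1_idr {t a b}.
Arguments comp1_assoc {t a b c d}.
Arguments c2 {t a b}.
Arguments id2 {t a b}.
Arguments vcomp {t a b f g h}.
Arguments hcomp {t a b c f f' g g'}.

Definition cast2 {K : TwoCat} {a b : K} {f f' g g' : c1 a b}
  (e : f = f') (e' : g = g') (x : c2 f g) : c2 f' g' := @transport2 _ (@c2 K a b) _ _ _ _ e e' x.

Definition is_iso2 {K : TwoCat} {a b : K} {f g : c1 a b} (x : c2 f g) : Prop :=
  exists y : c2 g f, vcomp y x = id2 f /\ vcomp x y = id2 g.

(* Triangle identities for eta : id_a => u o f, eps : f o u => id_b
   (the associator and unitors of the strict 2-category K are identities). *)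
Definition triangles {K : TwoCat} {a b : K} (f : c1 a b) (u : c1 b a)
  (eta : c2 (id1 a) (comp1 u f)) (eps : c2 (comp1 f u) (id1 b)) : Prop :=
  cast2 (comp1_idr f) (comp1_idl f)
    (vcomp (hcomp eps (id2 f)) (cast2 eq_refl (comp1_assoc f u f) (hcomp (id2 f) eta)))
    = id2 f
  /\
  cast2 (comp1_idl u) (comp1_idr u)
    (vcomp (hcomp (id2 u) eps) (cast2 eq_refl (eq_sym (comp1_assoc u f u)) (hcomp eta (id2 u))))
    = id2 u.

(* u is a left adjoint of f (paper's convention: eta : id => u o f,
   eps : f o u => id).  u is a right adjoint of f iff f is a left adjoint of u. *)
Definition is_left_adjoint {K : TwoCat} {a b : K} (f : c1 a b) (u : c1 b a) : Prop :=
  exists eta eps, @triangles K a b f u eta eps.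

Definition twocat_autonomous (K : TwoCat) : Prop :=
  forall (a b : K) (f : c1 a b),
    (exists u : c1 b a, is_left_adjoint f u) /\ (exists u : c1 b a, is_left_adjoint u f).

(* Lax functors Del(E) -> K.  In Del(E), Y o X = Y (x) X, the associator
   and unitors are those of E.                                         *)
Record LaxFunctor (E : MonCat) (K : TwoCat) := {
  fob : K;
  f1 : E -> c1 fob fob;
  f2 : forall X Y : E, mhom X Y -> c2 (f1 X) (f1 Y);
  f2_id : forall X, f2 (mid X) = id2 (f1 X);
  f2_comp : forall X Y Z (f : mhom X Y) (g : mhom Y Z),
      f2 (mcomp g f) = vcomp (f2 g) (f2 f);
  fmu : forall Y X : E, c2 (comp1 (f1 Y) (f1 X)) (f1 (mten Y X));
  fmu_nat : forall X X' Y Y' (f : mhom X X') (g : mhom Y Y'),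
      vcomp (fmu Y' X') (hcomp (f2 g) (f2 f)) = vcomp (f2 (mtenm g f)) (fmu Y X);
  feta : c2 (id1 fob) (f1 munit);
  fassoc : forall X Y Z : E,
      vcomp (f2 (massoc Z Y X))
        (vcomp (fmu (mten Z Y) X) (hcomp (fmu Z Y) (id2 (f1 X))))
      = cast2 (comp1_assoc (f1 X) (f1 Y) (f1 Z)) eq_refl
          (vcomp (fmu Z (mten Y X)) (hcomp (id2 (f1 Z)) (fmu Y X)));
  flunit : forall X : E,
      cast2 (comp1_idl (f1 X)) eq_refl
        (vcomp (f2 (mlunit X)) (vcomp (fmu munit X) (hcomp feta (id2 (f1 X)))))
      = id2 (f1 X);
  frunit : forall X : E,
      cast2 (comp1_idr (f1 X)) eq_refl
        (vcomp (f2 (mrunit X)) (vcomp (fmu X munit) (hcomp (id2 (f1 X)) feta)))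
      = id2 (f1 X)
}.
Arguments fob {E K}.
Arguments f1 {E K}.
Arguments f2 {E K} l {X Y}.
Arguments fmu {E K}.
Arguments feta {E K}.

Definition is_pseudo {E K} (F : LaxFunctor E K) : Prop :=
  (forall Y X : E, is_iso2 (fmu F Y X)) /\ is_iso2 (feta F).

Record ColaxTrans {E K} (F G : LaxFunctor E K) := {
  tM : c1 (fob F) (fob G);
  tsig : forall X : E, c2 (comp1 tM (f1 F X)) (comp1 (f1 G X) tM);
  tsig_nat : forall X X' (f : mhom X X'),
      vcomp (hcomp (f2 G f) (id2 tM)) (tsig X) = vcomp (tsig X') (hcomp (id2 tM) (f2 F f));
  tsig_mu : forall Y X : E,
      vcomp (hcomp (fmu G Y X) (id2 tM))
        (cast2 eq_refl (comp1_assoc tM (f1 G X) (f1 G Y))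
          (vcomp (hcomp (id2 (f1 G Y)) (tsig X))
            (cast2 eq_refl (eq_sym (comp1_assoc (f1 F X) tM (f1 G Y)))
              (hcomp (tsig Y) (id2 (f1 F X))))))
      = cast2 (comp1_assoc (f1 F X) (f1 F Y) tM) eq_refl
          (vcomp (tsig (mten Y X)) (hcomp (id2 tM) (fmu F Y X)));
  tsig_eta :
      cast2 (comp1_idr tM) eq_refl (vcomp (tsig munit) (hcomp (id2 tM) (feta F)))
      = cast2 (comp1_idl tM) eq_refl (hcomp (feta G) (id2 tM))
}.
Arguments tM {E K F G}.
Arguments tsig {E K F G}.

Definition id_sig {E K} (F : LaxFunctor E K) :
  forall X : E, c2 (comp1 (id1 (fob F)) (f1 F X)) (comp1 (f1 F X) (id1 (fob F))) :=
  fun X => cast2 (eq_sym (comp1_idl (f1 F X))) (eq_sym (comp1_idr (f1 F X))) (id2 (f1 F X)).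

Definition comp_sig {E K} {F G H : LaxFunctor E K}
  (M : c1 (fob F) (fob G)) (N : c1 (fob G) (fob H))
  (sM : forall X : E, c2 (comp1 M (f1 F X)) (comp1 (f1 G X) M))
  (sN : forall X : E, c2 (comp1 N (f1 G X)) (comp1 (f1 H X) N)) :
  forall X : E, c2 (comp1 (comp1 N M) (f1 F X)) (comp1 (f1 H X) (comp1 N M)) :=
  fun X => cast2 (comp1_assoc (f1 F X) M N) (eq_sym (comp1_assoc M N (f1 H X)))
    (vcomp (hcomp (sN X) (id2 M))
      (cast2 eq_refl (comp1_assoc M (f1 G X) N) (hcomp (id2 N) (sM X)))).

Definition is_modif {E K} {F G : LaxFunctor E K} {M N : c1 (fob F) (fob G)}
  (sM : forall X : E, c2 (comp1 M (f1 F X)) (comp1 (f1 G X) M))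
  (sN : forall X : E, c2 (comp1 N (f1 F X)) (comp1 (f1 G X) N))
  (a : c2 M N) : Prop :=
  forall X : E, vcomp (hcomp (id2 (f1 G X)) a) (sM X) = vcomp (sN X) (hcomp a (id2 (f1 F X))).

(* Vertical/horizontal composition of modifications and
   the associator/unitors of Z^w_l(E,K) are computed on the underlying
   2-cells of K, so the triangle identities in Z^w_l(E,K) are exactly the
   triangle identities of the underlying 2-cells in K. *)
Definition is_left_adjoint_Z {E K} {F G : LaxFunctor E K}
  (T : ColaxTrans F G) (U : ColaxTrans G F) : Prop :=
  exists (eta : c2 (id1 (fob F)) (comp1 (tM U) (tM T)))
         (eps : c2 (comp1 (tM T) (tM U)) (id1 (fob G))),
    is_modif (id_sig F) (comp_sig (tsig T) (tsig U)) eta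
    /\ is_modif (comp_sig (tsig U) (tsig T)) (id_sig G) eps
    /\ triangles eta eps.

From Stdlib Require Import Eqdep ClassicalEpsilon.
Set Implicit Arguments.
Unset Strict Implicit.

(* The underlying 1-cell M of a colax transformation (M, σ) : F -> G has both
   adjoints in K; what has to be shown is that σ can be transported along them.
   A pseudofunctor sends a dual pair (L, R) of E to an adjunction between F L and
   F R in K, with unit F²⁻¹·F(coev)·F⁰ and counit F⁰⁻¹·F(ev)·F².  A colax or lax
   transformation between pseudofunctors is compatible with these adjunctions,
   so each of its components is invertible, with inverse the mate of the
   component at the dual object.
   If u is the left adjoint of M (η : 1 => u M, ε : M u => 1), the mates
   θ_X = (u G_X ε)·(u σ_X u)·(η F_X u) form a lax transformation, so θ is
   invertible and (u, θ⁻¹) is a colax transformation G -> F.  If v is the right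
   adjoint (η : 1 => M v, ε : v M => 1), σ itself is invertible and the mates of
   σ⁻¹ make v a colax transformation.  In both cases the unit and counit of the
   adjunction in K are modifications: this is the defining property of mates,
   and the triangle identities are inherited from K. *)

(** * Untyped 2-cells *)

(* Once packed with their boundaries, 2-cells whose boundaries agree only up to
   the strict 1-cell laws become equal, so the casts of the strict 2-category
   disappear; [None] is the junk value of a vertical composite whose
   boundaries do not match. *)
Section Cells.
Context (K : TwoCat).

Definition cell (a b : K) := option {f : c1 a b & {g : c1 a b & c2 f g}}.

Definition pack {a b : K} {f g : c1 a b} (x : c2 f g) : cell a b :=
  Some (existT _ f (existT _ g x)).
Definition idc {a b : K} (f : c1 a b) : cell a b := pack (id2 f).

Definition hc {a b c : K} (q : cell b c) (p : cell a b) : cell a c :=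
  match q, p with
  | Some (existT _ _ (existT _ _ y)), Some (existT _ _ (existT _ _ x)) => pack (hcomp y x)
  | _, _ => None
  end.

Definition vc {a b : K} (q p : cell a b) : cell a b :=
  match p, q with
  | Some (existT _ _ (existT _ g x)), Some (existT _ g' (existT _ _ y)) =>
      match excluded_middle_informative (g = g') with
      | left e => pack (vcomp y (cast2 eq_refl e x))
      | right _ => None
      end
  | _, _ => None
  end.

Definition typed {a b : K} (C : cell a b) (f g : c1 a b) : Prop :=
  exists x : c2 f g, C = pack x.

Lemma pack_inj {a b : K} {f g : c1 a b} (x y : c2 f g) : pack x = pack y -> x = y.
Proof.
  intro H; injection H; intro H'.
  apply inj_pair2 in H'; apply inj_pair2 in H'; exact H'.
Qed.

Lemma pack_cast {a b : K} {f f' g g' : c1 a b} (e : f = f') (e' : g = g') (x : c2 f g) :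
  pack (cast2 e e' x) = pack x.
Proof. destruct e, e'; reflexivity. Qed.

Lemma pack_transport {a b : K} {f f' g g' : c1 a b} (e : f = f') (e' : g = g') (x : c2 f g) :
  pack (@transport2 _ (@c2 K a b) _ _ _ _ e e' x) = pack x.
Proof. destruct e, e'; reflexivity. Qed.

Lemma pack_vcomp {a b : K} {f g h : c1 a b} (y : c2 g h) (x : c2 f g) :
  pack (vcomp y x) = vc (pack y) (pack x).
Proof.
  unfold vc, pack at 2 3; destruct excluded_middle_informative as [e|n].
  - rewrite (UIP_refl _ _ e); reflexivity.
  - contradiction.
Qed.

Lemma pack_hcomp {a b c : K} {f f' : c1 a b} {g g' : c1 b c} (y : c2 g g') (x : c2 f f') :
  pack (hcomp y x) = hc (pack y) (pack x).
Proof. reflexivity. Qed.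

Lemma pack_id2 {a b : K} (f : c1 a b) : pack (id2 f) = idc f.
Proof. reflexivity. Qed.

Lemma vc_pack_mismatch {a b : K} {f g g' k : c1 a b} (y : c2 g' k) (x : c2 f g) :
  g <> g' -> vc (pack y) (pack x) = None.
Proof. intro n; unfold vc, pack; destruct excluded_middle_informative; easy. Qed.

Lemma vc_assoc {a b : K} (r q p : cell a b) : vc r (vc q p) = vc (vc r q) p.
Proof.
  destruct p as [[f [g x]]|]; [|destruct q as [[? [? ?]]|], r as [[? [? ?]]|]; reflexivity].
  destruct q as [[g' [k y]]|]; [|destruct r as [[? [? ?]]|]; reflexivity].
  change (Some (existT _ g' (existT _ k y))) with (pack y).
  change (Some (existT _ f (existT _ g x))) with (pack x).
  destruct (excluded_middle_informative (g = g')) as [<-|n1].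
  - rewrite <- pack_vcomp.
    destruct r as [[k' [l z]]|]; [|reflexivity].
    change (Some (existT _ k' (existT _ l z))) with (pack z).
    destruct (excluded_middle_informative (k = k')) as [<-|n2].
    + rewrite <- !pack_vcomp, vcomp_assoc; reflexivity.
    + rewrite !(vc_pack_mismatch _ _ n2); reflexivity.
  - rewrite (vc_pack_mismatch _ _ n1).
    destruct r as [[k' [l z]]|]; [|reflexivity].
    change (Some (existT _ k' (existT _ l z))) with (pack z).
    destruct (excluded_middle_informative (k = k')) as [<-|n2].
    + rewrite <- pack_vcomp, (vc_pack_mismatch _ _ n1); reflexivity.
    + rewrite (vc_pack_mismatch _ _ n2); reflexivity.
Qed.

Lemma hc_assoc {a b c d : K} (r : cell c d) (q : cell b c) (p : cell a b) :
  hc r (hc q p) = hc (hc r q) p.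
Proof.
  destruct p as [[f [f' x]]|], q as [[g [g' y]]|], r as [[k [k' z]]|]; try reflexivity.
  change (pack (hcomp z (hcomp y x)) = pack (hcomp (hcomp z y) x)).
  rewrite <- (pack_transport (comp1_assoc f g k) (comp1_assoc f' g' k')), hcomp_assoc.
  reflexivity.
Qed.

Lemma hc_idl {a b : K} (p : cell a b) : hc (idc (id1 b)) p = p.
Proof.
  destruct p as [[f [f' x]]|]; [|reflexivity].
  change (pack (hcomp (id2 (id1 b)) x) = pack x).
  rewrite <- (pack_transport (comp1_idl f) (comp1_idl f')), hcomp_idl; reflexivity.
Qed.

Lemma hc_idr {a b : K} (p : cell a b) : hc p (idc (id1 a)) = p.
Proof.
  destruct p as [[f [f' x]]|]; [|reflexivity].
  change (pack (hcomp x (id2 (id1 a))) = pack x).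
  rewrite <- (pack_transport (comp1_idr f) (comp1_idr f')), hcomp_idr; reflexivity.
Qed.

Lemma hc_idc {a b c : K} (g : c1 b c) (f : c1 a b) : hc (idc g) (idc f) = idc (comp1 g f).
Proof. unfold idc; rewrite <- pack_hcomp, hcomp_id; reflexivity. Qed.

Lemma typed_pack {a b : K} {f g : c1 a b} (x : c2 f g) : typed (pack x) f g.
Proof. exists x; reflexivity. Qed.

Lemma typed_idc {a b : K} (f : c1 a b) : typed (idc f) f f.
Proof. apply typed_pack. Qed.

Lemma typed_hc {a b c : K} (q : cell b c) (p : cell a b) g g' f f' :
  typed q g g' -> typed p f f' -> typed (hc q p) (comp1 g f) (comp1 g' f').
Proof. intros [y ->] [x ->]; apply typed_pack. Qed.

Lemma typed_vc {a b : K} (q p : cell a b) f g g' k :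
  typed q g' k -> typed p f g -> g = g' -> typed (vc q p) f k.
Proof. intros [y ->] [x ->] <-; rewrite <- pack_vcomp; apply typed_pack. Qed.

Lemma typed_conv {a b : K} (C : cell a b) f g f' g' :
  typed C f g -> f = f' -> g = g' -> typed C f' g'.
Proof. intros H <- <-; exact H. Qed.

Lemma vc_idl {a b : K} (p : cell a b) f g : typed p f g -> vc (idc g) p = p.
Proof. intros [x ->]; unfold idc; rewrite <- pack_vcomp, vcomp_idl; reflexivity. Qed.

Lemma vc_idr {a b : K} (p : cell a b) f g : typed p f g -> vc p (idc f) = p.
Proof. intros [x ->]; unfold idc; rewrite <- pack_vcomp, vcomp_idr; reflexivity. Qed.

Lemma hc_vc {a b c : K} (y1 y2 : cell b c) (x1 x2 : cell a b) g g' g'' f f' f'' :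
  typed y1 g g' -> typed y2 g' g'' -> typed x1 f f' -> typed x2 f' f'' ->
  hc (vc y2 y1) (vc x2 x1) = vc (hc y2 x2) (hc y1 x1).
Proof.
  intros [b1 ->] [b2 ->] [a1 ->] [a2 ->].
  rewrite <- !pack_vcomp, <- !pack_hcomp, <- pack_vcomp, interchange; reflexivity.
Qed.

Definition cell2 {a b : K} {C : cell a b} {f g : c1 a b} (H : typed C f g) : c2 f g :=
  proj1_sig (constructive_indefinite_description _ H).

Lemma pack_cell2 {a b : K} {C : cell a b} {f g : c1 a b} (H : typed C f g) :
  pack (cell2 H) = C.
Proof. unfold cell2; destruct constructive_indefinite_description as [x Hx]; auto. Qed.

End Cells.

Section Whiskering.
Context (K : TwoCat).

Definition whisker {a b c d : K} (L : c1 c d) (x : cell b c) (R : c1 a b) : cell a d :=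
  hc (idc L) (hc x (idc R)).

Lemma typed_whisker {a b c d : K} (L : c1 c d) (x : cell b c) (R : c1 a b) s t :
  typed x s t -> typed (whisker L x R) (comp1 L (comp1 s R)) (comp1 L (comp1 t R)).
Proof.
  intro H; unfold whisker.
  apply typed_hc; [apply typed_idc|]; apply typed_hc; [exact H|apply typed_idc].
Qed.

Lemma whisker_whisker {a b c d e f : K} (L : c1 e f) (L' : c1 d e) (x : cell c d)
  (R' : c1 b c) (R : c1 a b) :
  whisker L (whisker L' x R') R = whisker (comp1 L L') x (comp1 R' R).
Proof. unfold whisker; rewrite <- !hc_idc, !hc_assoc; reflexivity. Qed.

Lemma whisker_vc {a b c d : K} (L : c1 c d) (x y : cell b c) (R : c1 a b) f g k :
  typed x f g -> typed y g k -> whisker L (vc y x) R = vc (whisker L y R) (whisker L x R).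
Proof.
  intros Hx Hy; unfold whisker.
  rewrite <- (hc_vc (g := L) (g' := L) (g'' := L) (f := comp1 f R) (f' := comp1 g R)
                (f'' := comp1 k R));
    try apply typed_idc; try (apply typed_hc; [assumption|apply typed_idc]).
  rewrite (vc_idl (f := L)) by apply typed_idc.
  rewrite <- (hc_vc (g := f) (g' := g) (g'' := k) (f := R) (f' := R) (f'' := R));
    try apply typed_idc; try assumption.
  rewrite (vc_idl (f := R)) by apply typed_idc; reflexivity.
Qed.

Lemma whisker_id1 {a b : K} (x : cell a b) : whisker (id1 b) x (id1 a) = x.
Proof. unfold whisker; rewrite hc_idl, hc_idr; reflexivity. Qed.

Lemma whisker_idc {a b c d : K} (L : c1 c d) (f : c1 b c) (R : c1 a b) :
  whisker L (idc f) R = idc (comp1 L (comp1 f R)).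
Proof. unfold whisker; rewrite !hc_idc; reflexivity. Qed.

End Whiskering.

Notation "⟪ x ⟫" := (whisker (id1 _) (pack x) (id1 _)).

Ltac simpl_comp1 :=
  repeat (first [rewrite <- comp1_assoc | rewrite comp1_idl | rewrite comp1_idr]).
Ltac simpl_comp1_in H :=
  repeat (first [rewrite <- comp1_assoc in H | rewrite comp1_idl in H | rewrite comp1_idr in H]).
Ltac solve_comp1 := first [reflexivity | (simpl_comp1; reflexivity)].
Ltac typed_auto := lazymatch goal with
 | |- typed (pack _) _ _ => apply typed_pack
 | |- typed (idc _) _ _ => apply typed_idc
 | |- typed (hc _ _) _ _ => eapply typed_hc; [typed_auto | typed_auto]
 | |- typed (vc _ _) _ _ => eapply typed_vc; [typed_auto | typed_auto | solve_comp1]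
 | |- typed (whisker _ _ _) _ _ => eapply typed_whisker; typed_auto
 | |- typed _ _ _ => eassumption
 end.
Ltac solve_typed := eapply typed_conv; [typed_auto | solve_comp1 | solve_comp1].
Ltac solve_side := first [solve_typed | solve_comp1].
Ltac drop_idc := repeat (first [erewrite vc_idl by solve_side | erewrite vc_idr by solve_side]).
Ltac drop_idc_in H :=
  repeat (first [erewrite vc_idl in H by solve_side | erewrite vc_idr in H by solve_side]).
Ltac vc_right := rewrite <- ?vc_assoc.
Ltac vc_right_in H := rewrite <- ?vc_assoc in H.

Section Exchange.
Context (K : TwoCat).

(* The two cells [x] and [y] sit side by side, separated by the 1-cell [M]. *)
Lemma whisker_exchange {z a b c d e : K} (L0 : c1 d e) (L1 : c1 b e) (R0 : c1 z c)
  (R1 : c1 z a) (M : c1 b c) (x : cell c d) (y : cell a b) s t s' t' :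
  typed x s t -> typed y s' t' -> R0 = comp1 M (comp1 s' R1) -> L1 = comp1 L0 (comp1 t M) ->
  vc (whisker L1 y R1) (whisker L0 x R0)
  = vc (whisker L0 x (comp1 M (comp1 t' R1))) (whisker (comp1 L0 (comp1 s M)) y R1).
Proof.
  intros Hx Hy -> ->; unfold whisker; rewrite <- !hc_idc, <- !hc_assoc.
  do 4 (erewrite <- (hc_vc (K := K)) by solve_side).
  drop_idc; rewrite <- ?hc_assoc.
  do 4 (erewrite <- (hc_vc (K := K)) by solve_side).
  drop_idc; reflexivity.
Qed.

Lemma whisker_exchange' {z a b c d e : K} (L0 : c1 d e) (L1 : c1 b e) (R0 : c1 z c)
  (R1 : c1 z a) (M : c1 b c) (x : cell c d) (y : cell a b) s t s' t' :
  typed x s t -> typed y s' t' -> R0 = comp1 M (comp1 t' R1) -> L1 = comp1 L0 (comp1 s M) ->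
  vc (whisker L0 x R0) (whisker L1 y R1)
  = vc (whisker (comp1 L0 (comp1 t M)) y R1) (whisker L0 x (comp1 M (comp1 s' R1))).
Proof.
  intros Hx Hy -> ->; symmetry.
  apply (whisker_exchange (s := s) (t := t) (s' := s') (t' := t')); auto.
Qed.

Lemma vc_chain2 {a b : K} (A B D : cell a b) :
  vc A B = D -> forall r, vc A (vc B r) = vc D r.
Proof. intros H r; rewrite vc_assoc, H; reflexivity. Qed.

Lemma vc_chain3 {a b : K} (A B C D : cell a b) :
  vc A (vc B C) = D -> forall r, vc A (vc B (vc C r)) = vc D r.
Proof. intros H r; rewrite (vc_assoc B C r); apply (vc_chain2 H). Qed.

Lemma whisker_exchange_chain {z a b c d e : K} (L0 : c1 d e) (L1 : c1 b e) (R0 : c1 z c)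
  (R1 : c1 z a) (M : c1 b c) (x : cell c d) (y : cell a b) s t s' t' (r : cell z e) :
  typed x s t -> typed y s' t' -> R0 = comp1 M (comp1 s' R1) -> L1 = comp1 L0 (comp1 t M) ->
  vc (whisker L1 y R1) (vc (whisker L0 x R0) r)
  = vc (whisker L0 x (comp1 M (comp1 t' R1))) (vc (whisker (comp1 L0 (comp1 s M)) y R1) r).
Proof. intros; rewrite vc_assoc; erewrite whisker_exchange; eauto; symmetry; apply vc_assoc. Qed.

Lemma whisker_exchange'_chain {z a b c d e : K} (L0 : c1 d e) (L1 : c1 b e) (R0 : c1 z c)
  (R1 : c1 z a) (M : c1 b c) (x : cell c d) (y : cell a b) s t s' t' (r : cell z e) :
  typed x s t -> typed y s' t' -> R0 = comp1 M (comp1 t' R1) -> L1 = comp1 L0 (comp1 s M) ->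
  vc (whisker L0 x R0) (vc (whisker L1 y R1) r)
  = vc (whisker (comp1 L0 (comp1 t M)) y R1) (vc (whisker L0 x (comp1 M (comp1 s' R1))) r).
Proof. intros; rewrite vc_assoc; erewrite whisker_exchange'; eauto; symmetry; apply vc_assoc. Qed.

End Exchange.

Ltac rewrite_chain H :=
  first [ rewrite H | rewrite (vc_chain2 H) | rewrite (vc_chain3 H) ]; vc_right.
Ltac rewrite_chain_rev H :=
  let H' := fresh in pose proof (eq_sym H) as H'; rewrite_chain H'; clear H'.
Ltac rewrite_chain_in H E :=
  first [ rewrite E in H | rewrite (vc_chain2 E) in H | rewrite (vc_chain3 E) in H ];
  vc_right_in H.
Ltac compose_after H X := apply (f_equal (fun Z => vc X Z)) in H; cbn beta in H; vc_right_in H.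
Ltac compose_before H X := apply (f_equal (fun Z => vc Z X)) in H; cbn beta in H; vc_right_in H.
Ltac whisker_in E L R H :=
  pose proof (f_equal (fun Z => whisker L Z R) E) as H; cbn beta in H;
  repeat (erewrite whisker_vc in H by solve_side);
  rewrite ?whisker_whisker, ?whisker_idc in H; simpl_comp1_in H.
Ltac slide x y M :=
  first [ erewrite (whisker_exchange_chain (x := x) (y := y) (M := M)) by solve_side
        | erewrite (whisker_exchange (x := x) (y := y) (M := M)) by solve_side
        | erewrite (whisker_exchange'_chain (x := x) (y := y) (M := M)) by solve_side
        | erewrite (whisker_exchange' (x := x) (y := y) (M := M)) by solve_side ];
  vc_right; simpl_comp1.
Ltac on_rhs tac := match goal with |- ?L = _ => let l := fresh in set (l := L); tac; subst l end.
Ltac on_lhs tac := match goal with |- _ = ?R => let r := fresh in set (r := R); tac; subst r end.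
Ltac pack_in H := apply (f_equal (fun z => pack z)) in H; cbn beta in H;
  repeat (first [ rewrite pack_vcomp in H | rewrite pack_cast in H | rewrite pack_transport in H
                | rewrite pack_hcomp in H | rewrite pack_id2 in H ]).
Ltac pack_goal := apply pack_inj;
  repeat (first [ rewrite pack_vcomp | rewrite pack_cast | rewrite pack_transport
                | rewrite pack_hcomp | rewrite pack_id2 ]).
Ltac unwhisker := unfold whisker; rewrite ?hc_idl, ?hc_idr.
Ltac unwhisker_in H := unfold whisker in H; rewrite ?hc_idl, ?hc_idr in H.
Ltac expand_cells := rewrite ?pack_vcomp; repeat (erewrite whisker_vc by solve_side); vc_right.
Ltac flatten_cells :=
  repeat (erewrite whisker_vc by solve_side); rewrite ?whisker_whisker; simpl_comp1; vc_right.

(** * Inverses and adjunctions *)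

Section Inverses.
Context (K : TwoCat).

Definition inv2 {a b : K} {f g : c1 a b} {x : c2 f g} (H : is_iso2 x) : c2 g f :=
  proj1_sig (constructive_indefinite_description _ H).

Lemma inv2_cancel_l {a b : K} {f g : c1 a b} {x : c2 f g} (H : is_iso2 x) :
  vc ⟪inv2 H⟫ ⟪x⟫ = idc f.
Proof.
  rewrite !whisker_id1, <- pack_vcomp; unfold inv2.
  destruct constructive_indefinite_description as [y Hy]; cbn.
  rewrite (proj1 Hy); reflexivity.
Qed.

Lemma inv2_cancel_r {a b : K} {f g : c1 a b} {x : c2 f g} (H : is_iso2 x) :
  vc ⟪x⟫ ⟪inv2 H⟫ = idc g.
Proof.
  rewrite !whisker_id1, <- pack_vcomp; unfold inv2.
  destruct constructive_indefinite_description as [y Hy]; cbn.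
  rewrite (proj2 Hy); reflexivity.
Qed.

Lemma is_iso2_of_cells {a b : K} {f g : c1 a b} (x : c2 f g) (T : cell a b) :
  typed T g f -> vc T (pack x) = idc f -> vc (pack x) T = idc g -> is_iso2 x.
Proof.
  intros [y ->] H1 H2; exists y.
  split; apply pack_inj; rewrite pack_vcomp; assumption.
Qed.

Lemma triangles_cells {a b : K} (f : c1 a b) (u : c1 b a) eta eps :
  @triangles K a b f u eta eps ->
  vc (whisker (id1 b) (pack eps) f) (whisker f (pack eta) (id1 a)) = idc f /\
  vc (whisker u (pack eps) (id1 b)) (whisker (id1 a) (pack eta) u) = idc u.
Proof.
  intros [H1 H2]; split.
  - pack_in H1; unwhisker; exact H1.
  - pack_in H2; unwhisker; exact H2.
Qed.

(* The inverse of [sX] is the mate of [sZ] along the two adjunctions. *)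
Lemma colax_square_is_iso2 {a b : K} (M : c1 a b) (AX AZ : c1 a a) (BX BZ : c1 b b)
  (sX : c2 (comp1 M AX) (comp1 BX M)) (sZ : c2 (comp1 M AZ) (comp1 BZ M))
  (nA : c2 (id1 a) (comp1 AZ AX)) (eA : c2 (comp1 AX AZ) (id1 a))
  (nB : c2 (id1 b) (comp1 BZ BX)) (eB : c2 (comp1 BX BZ) (id1 b))
  (tri_A : vc (whisker (id1 a) (pack eA) AX) (whisker AX (pack nA) (id1 a)) = idc AX)
  (tri_B : vc (whisker (id1 b) (pack eB) BX) (whisker BX (pack nB) (id1 b)) = idc BX)
  (counit_compat : vc (whisker (id1 b) (pack eB) M)
          (vc (whisker BX (pack sZ) (id1 a)) (whisker (id1 b) (pack sX) AZ))
        = whisker M (pack eA) (id1 a))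
  (unit_compat : vc (whisker BZ (pack sX) (id1 a))
          (vc (whisker (id1 b) (pack sZ) AX) (whisker M (pack nA) (id1 a)))
        = whisker (id1 b) (pack nB) M) :
  is_iso2 sX.
Proof.
  apply (is_iso2_of_cells (T := vc (whisker (id1 b) (pack eB) (comp1 M AX))
     (vc (whisker BX (pack sZ) AX) (whisker (comp1 BX M) (pack nA) (id1 a))))).
  - solve_typed.
  - rewrite <- (whisker_id1 (pack sX)); vc_right.
    slide (pack sX) (pack nA) (id1 a).
    whisker_in counit_compat (id1 b) AX counit_compat'. rewrite_chain counit_compat'.
    whisker_in tri_A M (id1 a) T'. rewrite_chain T'. reflexivity.
  - rewrite <- (whisker_id1 (pack sX)); vc_right.
    slide (pack eB) (pack sX) (id1 b).
    whisker_in unit_compat BX (id1 a) unit_compat'. rewrite_chain unit_compat'.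
    whisker_in tri_B (id1 b) M T'. rewrite_chain T'. reflexivity.
Qed.

Lemma lax_square_is_iso2 {a b : K} (N : c1 b a) (AX AY : c1 a a) (BX BY : c1 b b)
  (tX : c2 (comp1 AX N) (comp1 N BX)) (tY : c2 (comp1 AY N) (comp1 N BY))
  (nA : c2 (id1 a) (comp1 AX AY)) (eA : c2 (comp1 AY AX) (id1 a))
  (nB : c2 (id1 b) (comp1 BX BY)) (eB : c2 (comp1 BY BX) (id1 b))
  (tri_A : vc (whisker AX (pack eA) (id1 a)) (whisker (id1 a) (pack nA) AX) = idc AX)
  (tri_B : vc (whisker BX (pack eB) (id1 b)) (whisker (id1 b) (pack nB) BX) = idc BX)
  (counit_compat : vc (whisker N (pack eB) (id1 b))
          (vc (whisker (id1 a) (pack tY) BX) (whisker AY (pack tX) (id1 b)))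
        = whisker (id1 a) (pack eA) N)
  (unit_compat : vc (whisker (id1 a) (pack tX) BY)
          (vc (whisker AX (pack tY) (id1 b)) (whisker (id1 a) (pack nA) N))
        = whisker N (pack nB) (id1 b)) :
  is_iso2 tX.
Proof.
  apply (is_iso2_of_cells (T := vc (whisker (comp1 AX N) (pack eB) (id1 b))
     (vc (whisker AX (pack tY) BX) (whisker (id1 a) (pack nA) (comp1 N BX))))).
  - solve_typed.
  - rewrite <- (whisker_id1 (pack tX)); vc_right.
    slide (pack nA) (pack tX) (id1 a).
    whisker_in counit_compat AX (id1 b) counit_compat'. rewrite_chain counit_compat'.
    whisker_in tri_A (id1 a) N T'. rewrite_chain T'. reflexivity.
  - rewrite <- (whisker_id1 (pack tX)); vc_right.
    slide (pack tX) (pack eB) (id1 b).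
    whisker_in unit_compat (id1 a) BX unit_compat'. rewrite_chain unit_compat'.
    whisker_in tri_B N (id1 b) T'. rewrite_chain T'. reflexivity.
Qed.

End Inverses.

(** * Pseudofunctors send duals to adjunctions *)

Section LaxFunctorCells.
Context {E : MonCat} {K : TwoCat} (F : LaxFunctor E K).
Local Notation A := (f1 F).

Lemma f2_comp_cells {X Y Z : E} (f : mhom X Y) (g : mhom Y Z) :
  vc ⟪f2 F g⟫ ⟪f2 F f⟫ = ⟪f2 F (mcomp g f)⟫.
Proof. rewrite !whisker_id1, <- pack_vcomp, f2_comp; reflexivity. Qed.

Lemma f2_id_cells (X : E) : ⟪f2 F (mid X)⟫ = idc (A X).
Proof. rewrite whisker_id1, f2_id; reflexivity. Qed.

Lemma fassoc_cells (X Y Z : E) :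
  vc ⟪f2 F (massoc Z Y X)⟫
    (vc ⟪fmu F (mten Z Y) X⟫ (whisker (id1 _) (pack (fmu F Z Y)) (A X)))
  = vc ⟪fmu F Z (mten Y X)⟫ (whisker (A Z) (pack (fmu F Y X)) (id1 _)).
Proof. pose proof (fassoc F X Y Z) as H; pack_in H; unwhisker; exact H. Qed.

Lemma flunit_cells (X : E) :
  vc ⟪f2 F (mlunit X)⟫ (vc ⟪fmu F munit X⟫ (whisker (id1 _) (pack (feta F)) (A X)))
  = idc (A X).
Proof. pose proof (flunit F X) as H; pack_in H; unwhisker; exact H. Qed.

Lemma frunit_cells (X : E) :
  vc ⟪f2 F (mrunit X)⟫ (vc ⟪fmu F X munit⟫ (whisker (A X) (pack (feta F)) (id1 _)))
  = idc (A X).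
Proof. pose proof (frunit F X) as H; pack_in H; unwhisker; exact H. Qed.

Lemma fmu_nat_l_cells (X Y Y' : E) (g : mhom Y Y') :
  vc ⟪fmu F Y' X⟫ (whisker (id1 _) (pack (f2 F g)) (A X))
  = vc ⟪f2 F (mtenm g (mid X))⟫ ⟪fmu F Y X⟫.
Proof.
  pose proof (fmu_nat F (mid X) g) as H; rewrite f2_id in H.
  pack_in H; unwhisker; exact H.
Qed.

Lemma fmu_nat_r_cells (X X' Y : E) (f : mhom X X') :
  vc ⟪fmu F Y X'⟫ (whisker (A Y) (pack (f2 F f)) (id1 _))
  = vc ⟪f2 F (mtenm (mid Y) f)⟫ ⟪fmu F Y X⟫.
Proof.
  pose proof (fmu_nat F f (mid Y)) as H; rewrite f2_id in H.
  pack_in H; unwhisker; exact H.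
Qed.

End LaxFunctorCells.

Section PseudoDuals.
Context {E : MonCat} {K : TwoCat} (F : LaxFunctor E K) (hF : is_pseudo F).
Local Notation A := (f1 F).
Local Notation I := (id1 (fob F)).

Definition fmu_inv (Y X : E) := inv2 (proj1 hF Y X).
Definition feta_inv := inv2 (proj2 hF).

Lemma fmu_inv_cancel_l Y X : vc ⟪fmu_inv Y X⟫ ⟪fmu F Y X⟫ = idc (comp1 (A Y) (A X)).
Proof. apply inv2_cancel_l. Qed.
Lemma fmu_inv_cancel_r Y X : vc ⟪fmu F Y X⟫ ⟪fmu_inv Y X⟫ = idc (A (mten Y X)).
Proof. apply inv2_cancel_r. Qed.
Lemma feta_inv_cancel_l : vc ⟪feta_inv⟫ ⟪feta F⟫ = idc I.
Proof. apply inv2_cancel_l. Qed.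
Lemma feta_inv_cancel_r : vc ⟪feta F⟫ ⟪feta_inv⟫ = idc (A munit).
Proof. apply inv2_cancel_r. Qed.

Context (L R : E) (ev : mhom (mten L R) munit) (coev : mhom munit (mten R L)).

Definition dual_counit : c2 (comp1 (A L) (A R)) I := vcomp feta_inv (vcomp (f2 F ev) (fmu F L R)).
Definition dual_unit : c2 I (comp1 (A R) (A L)) := vcomp (fmu_inv R L) (vcomp (f2 F coev) (feta F)).

Lemma dual_triangle_r
  (snake : mcomp (mrunit R) (mcomp (mtenm (mid R) ev)
      (mcomp (massoc R L R) (mcomp (mtenm coev (mid R)) (mlunit_inv R)))) = mid R) :
  vc (whisker (A R) (pack dual_counit) I) (whisker I (pack dual_unit) (A R)) = idc (A R).
Proof.
  unfold dual_counit, dual_unit; expand_cells.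
  pose proof (fassoc_cells F R L R) as Hassoc.
  compose_after Hassoc ⟪fmu_inv R (mten L R)⟫.
  rewrite_chain_in Hassoc (fmu_inv_cancel_l R (mten L R)); drop_idc_in Hassoc.
  compose_before Hassoc (whisker I (pack (fmu_inv R L)) (A R)).
  whisker_in (fmu_inv_cancel_r R L) (id1 (fob F)) (A R) Cmu.
  rewrite_chain_in Hassoc Cmu; drop_idc_in Hassoc.
  rewrite_chain_rev Hassoc.
  pose proof (fmu_nat_r_cells F R ev) as Hev.
  compose_after Hev ⟪fmu_inv R munit⟫.
  rewrite_chain_in Hev (fmu_inv_cancel_l R munit); drop_idc_in Hev.
  compose_before Hev ⟪fmu_inv R (mten L R)⟫.
  rewrite_chain_in Hev (fmu_inv_cancel_r R (mten L R)); drop_idc_in Hev.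
  rewrite_chain Hev.
  rewrite_chain (fmu_nat_l_cells F R coev).
  pose proof (frunit_cells F R) as Hrunit.
  compose_before Hrunit (whisker (A R) (pack feta_inv) I).
  whisker_in feta_inv_cancel_r (A R) (id1 (fob F)) Ceta.
  rewrite_chain_in Hrunit Ceta; drop_idc_in Hrunit.
  compose_before Hrunit ⟪fmu_inv R munit⟫.
  rewrite_chain_in Hrunit (fmu_inv_cancel_r R munit); drop_idc_in Hrunit.
  rewrite_chain_rev Hrunit.
  pose proof (flunit_cells F R) as Hlunit.
  compose_after Hlunit ⟪f2 F (mlunit_inv R)⟫.
  rewrite_chain_in Hlunit (f2_comp_cells F (mlunit R) (mlunit_inv R)).
  rewrite mlunit_iso1, f2_id_cells in Hlunit; drop_idc_in Hlunit.
  rewrite_chain Hlunit.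
  do 4 rewrite_chain (@f2_comp_cells E K F).
  rewrite snake, f2_id_cells; reflexivity.
Qed.

Lemma dual_triangle_l
  (snake : mcomp (mlunit L) (mcomp (mtenm ev (mid L))
      (mcomp (massoc_inv L R L) (mcomp (mtenm (mid L) coev) (mrunit_inv L)))) = mid L) :
  vc (whisker I (pack dual_counit) (A L)) (whisker (A L) (pack dual_unit) I) = idc (A L).
Proof.
  unfold dual_counit, dual_unit; expand_cells.
  pose proof (fassoc_cells F L R L) as Hassoc.
  compose_after Hassoc ⟪f2 F (massoc_inv L R L)⟫.
  rewrite_chain_in Hassoc (f2_comp_cells F (massoc L R L) (massoc_inv L R L)).
  rewrite massoc_iso1, f2_id_cells in Hassoc; drop_idc_in Hassoc.
  compose_after Hassoc ⟪fmu_inv (mten L R) L⟫.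
  rewrite_chain_in Hassoc (fmu_inv_cancel_l (mten L R) L); drop_idc_in Hassoc.
  compose_before Hassoc (whisker (A L) (pack (fmu_inv R L)) I).
  whisker_in (fmu_inv_cancel_r R L) (A L) (id1 (fob F)) Cmu.
  rewrite_chain_in Hassoc Cmu; drop_idc_in Hassoc.
  rewrite_chain Hassoc.
  pose proof (fmu_nat_l_cells F L ev) as Hev.
  compose_after Hev ⟪fmu_inv munit L⟫.
  rewrite_chain_in Hev (fmu_inv_cancel_l munit L); drop_idc_in Hev.
  compose_before Hev ⟪fmu_inv (mten L R) L⟫.
  rewrite_chain_in Hev (fmu_inv_cancel_r (mten L R) L); drop_idc_in Hev.
  rewrite_chain Hev.
  rewrite_chain (fmu_nat_r_cells F L coev).
  pose proof (flunit_cells F L) as Hlunit.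
  compose_before Hlunit (whisker I (pack feta_inv) (A L)).
  whisker_in feta_inv_cancel_r (id1 (fob F)) (A L) Ceta.
  rewrite_chain_in Hlunit Ceta; drop_idc_in Hlunit.
  compose_before Hlunit ⟪fmu_inv munit L⟫.
  rewrite_chain_in Hlunit (fmu_inv_cancel_r munit L); drop_idc_in Hlunit.
  rewrite_chain_rev Hlunit.
  pose proof (frunit_cells F L) as Hrunit.
  compose_after Hrunit ⟪f2 F (mrunit_inv L)⟫.
  rewrite_chain_in Hrunit (f2_comp_cells F (mrunit L) (mrunit_inv L)).
  rewrite mrunit_iso1, f2_id_cells in Hrunit; drop_idc_in Hrunit.
  rewrite_chain Hrunit.
  do 4 rewrite_chain (@f2_comp_cells E K F).
  rewrite snake, f2_id_cells; reflexivity.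
Qed.

End PseudoDuals.

(** * Colax transformations between pseudofunctors are invertible *)

Section ColaxCells.
Context {E : MonCat} {K : TwoCat} {F G : LaxFunctor E K} (T : ColaxTrans F G).
Local Notation A := (f1 F).
Local Notation B := (f1 G).
Local Notation M := (tM T).
Local Notation s := (tsig T).
Local Notation IF := (id1 (fob F)).
Local Notation IG := (id1 (fob G)).

Lemma tsig_nat_cells {X X' : E} (f : mhom X X') :
  vc (whisker IG (pack (f2 G f)) M) ⟪s X⟫ = vc ⟪s X'⟫ (whisker M (pack (f2 F f)) IF).
Proof. pose proof (tsig_nat T f) as H; pack_in H; unwhisker; exact H. Qed.

Lemma tsig_mu_cells (Y X : E) :
  vc (whisker IG (pack (fmu G Y X)) M)
    (vc (whisker (B Y) (pack (s X)) IF) (whisker IG (pack (s Y)) (A X)))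
  = vc ⟪s (mten Y X)⟫ (whisker M (pack (fmu F Y X)) IF).
Proof. pose proof (tsig_mu T Y X) as H; pack_in H; unwhisker; exact H. Qed.

Lemma tsig_eta_cells :
  vc ⟪s munit⟫ (whisker M (pack (feta F)) IF) = whisker IG (pack (feta G)) M.
Proof. pose proof (tsig_eta T) as H; pack_in H; unwhisker; exact H. Qed.

Context (hF : is_pseudo F) (hG : is_pseudo G).

Lemma tsig_dual_counit (X Z : E) (ev : mhom (mten X Z) munit) :
  vc (whisker IG (pack (dual_counit hG ev)) M)
    (vc (whisker (B X) (pack (s Z)) IF) (whisker IG (pack (s X)) (A Z)))
  = whisker M (pack (dual_counit hF ev)) IF.
Proof.
  unfold dual_counit; expand_cells.
  rewrite_chain (tsig_mu_cells X Z). rewrite_chain (tsig_nat_cells ev).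
  pose proof tsig_eta_cells as H.
  compose_after H (whisker IG (pack (feta_inv hG)) M).
  whisker_in (feta_inv_cancel_l hG) (id1 (fob G)) (tM T) C; rewrite_chain_in H C; drop_idc_in H.
  compose_before H (whisker M (pack (feta_inv hF)) IF).
  whisker_in (feta_inv_cancel_r hF) (tM T) (id1 (fob F)) C'; rewrite_chain_in H C'; drop_idc_in H.
  rewrite_chain_rev H; reflexivity.
Qed.

Lemma tsig_dual_unit (X Z : E) (coev : mhom munit (mten Z X)) :
  vc (whisker (B Z) (pack (s X)) IF)
    (vc (whisker IG (pack (s Z)) (A X)) (whisker M (pack (dual_unit hF coev)) IF))
  = whisker IG (pack (dual_unit hG coev)) M.
Proof.
  unfold dual_unit; expand_cells.
  pose proof (tsig_mu_cells Z X) as H.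
  compose_after H (whisker IG (pack (fmu_inv hG Z X)) M).
  whisker_in (fmu_inv_cancel_l hG Z X) (id1 (fob G)) (tM T) C; rewrite_chain_in H C; drop_idc_in H.
  compose_before H (whisker M (pack (fmu_inv hF Z X)) IF).
  whisker_in (fmu_inv_cancel_r hF Z X) (tM T) (id1 (fob F)) C'.
  rewrite_chain_in H C'; drop_idc_in H.
  rewrite_chain H.
  rewrite_chain_rev (tsig_nat_cells coev).
  rewrite_chain tsig_eta_cells; reflexivity.
Qed.

Lemma tsig_is_iso2 (X Z : E) (ev : mhom (mten X Z) munit) (coev : mhom munit (mten Z X))
  (snake : mcomp (mlunit X) (mcomp (mtenm ev (mid X))
      (mcomp (massoc_inv X Z X) (mcomp (mtenm (mid X) coev) (mrunit_inv X)))) = mid X) :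
  is_iso2 (s X).
Proof.
  exact (colax_square_is_iso2 (dual_triangle_l hF snake) (dual_triangle_l hG snake)
           (tsig_dual_counit ev) (tsig_dual_unit coev)).
Qed.

End ColaxCells.

(** * Adjoints of colax transformations *)

Section ColaxOfCells.
Context {E : MonCat} {K : TwoCat} {F G : LaxFunctor E K}.
Local Notation A := (f1 F).
Local Notation B := (f1 G).
Local Notation IF := (id1 (fob F)).
Local Notation IG := (id1 (fob G)).
Context (N : c1 (fob F) (fob G)) (sig : forall X : E, c2 (comp1 N (A X)) (comp1 (B X) N)).

Hypothesis sig_nat : forall X X' (f : mhom X X'),
  vc (whisker IG (pack (f2 G f)) N) ⟪sig X⟫ = vc ⟪sig X'⟫ (whisker N (pack (f2 F f)) IF).
Hypothesis sig_mu : forall Y X : E,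
  vc (whisker IG (pack (fmu G Y X)) N)
    (vc (whisker (B Y) (pack (sig X)) IF) (whisker IG (pack (sig Y)) (A X)))
  = vc ⟪sig (mten Y X)⟫ (whisker N (pack (fmu F Y X)) IF).
Hypothesis sig_eta :
  vc ⟪sig munit⟫ (whisker N (pack (feta F)) IF) = whisker IG (pack (feta G)) N.

Definition colax_of_cells : ColaxTrans F G.
Proof.
  refine {| tM := N; tsig := sig |}.
  - intros X X' f; pose proof (sig_nat f) as H; unwhisker_in H; pack_goal; exact H.
  - intros Y X; pose proof (sig_mu Y X) as H; unwhisker_in H; pack_goal; exact H.
  - pose proof sig_eta as H; unwhisker_in H; pack_goal; exact H.
Defined.

End ColaxOfCells.

Lemma is_left_adjoint_Z_of_cells {E : MonCat} {K : TwoCat} {F G : LaxFunctor E K}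
  (T : ColaxTrans F G) (U : ColaxTrans G F)
  (eta : c2 (id1 (fob F)) (comp1 (tM U) (tM T))) (eps : c2 (comp1 (tM T) (tM U)) (id1 (fob G))) :
  (forall X, whisker (f1 F X) (pack eta) (id1 _)
     = vc (whisker (id1 _) (pack (tsig U X)) (tM T))
         (vc (whisker (tM U) (pack (tsig T X)) (id1 _)) (whisker (id1 _) (pack eta) (f1 F X)))) ->
  (forall X, vc (whisker (f1 G X) (pack eps) (id1 _))
       (vc (whisker (id1 _) (pack (tsig T X)) (tM U)) (whisker (tM T) (pack (tsig U X)) (id1 _)))
     = whisker (id1 _) (pack eps) (f1 G X)) ->
  triangles eta eps -> is_left_adjoint_Z T U.
Proof.
  intros Hunit Hcounit Htri; exists eta, eps; split; [|split]; [intro X..|exact Htri];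
    unfold id_sig, comp_sig.
  - pose proof (Hunit X) as H; unwhisker_in H; pack_goal; drop_idc; vc_right; exact H.
  - pose proof (Hcounit X) as H; unwhisker_in H; pack_goal; drop_idc; vc_right; exact H.
Qed.

Section LeftAdjoint.
Context {E : MonCat} {K : TwoCat} {F G : LaxFunctor E K} (T : ColaxTrans F G).
Local Notation A := (f1 F).
Local Notation B := (f1 G).
Local Notation M := (tM T).
Local Notation s := (tsig T).
Local Notation IF := (id1 (fob F)).
Local Notation IG := (id1 (fob G)).
Context (u : c1 (fob G) (fob F)) (et : c2 IF (comp1 u M)) (ep : c2 (comp1 M u) IG)
  (tri_M : vc (whisker IG (pack ep) M) (whisker M (pack et) IF) = idc M)
  (tri_u : vc (whisker u (pack ep) IG) (whisker IF (pack et) u) = idc u).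

Definition mate_cell (X : E) : cell (fob G) (fob F) :=
  vc (whisker (comp1 u (B X)) (pack ep) IG)
    (vc (whisker u (pack (s X)) u) (whisker IF (pack et) (comp1 (A X) u))).

Lemma typed_mate_cell (X : E) : typed (mate_cell X) (comp1 (A X) u) (comp1 u (B X)).
Proof. unfold mate_cell; solve_typed. Qed.

Definition mate (X : E) : c2 (comp1 (A X) u) (comp1 u (B X)) := cell2 (typed_mate_cell X).

Lemma pack_mate (X : E) : pack (mate X) = mate_cell X.
Proof. apply pack_cell2. Qed.

Ltac unfold_mate := rewrite ?pack_mate; unfold mate_cell; flatten_cells.

Lemma mate_nat {X X' : E} (f : mhom X X') :
  vc (whisker u (pack (f2 G f)) IG) ⟪mate X⟫ = vc ⟪mate X'⟫ (whisker IF (pack (f2 F f)) u).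
Proof.
  unfold_mate.
  slide (pack (f2 G f)) (pack ep) (id1 (fob G)).
  whisker_in (tsig_nat_cells T f) u u C; rewrite_chain C.
  slide (pack et) (pack (f2 F f)) (id1 (fob F)).
  reflexivity.
Qed.

Lemma mate_eta : vc ⟪mate munit⟫ (whisker IF (pack (feta F)) u) = whisker u (pack (feta G)) IG.
Proof.
  unfold_mate.
  slide (pack et) (pack (feta F)) (id1 (fob F)).
  whisker_in (tsig_eta_cells T) u u C; rewrite_chain C.
  slide (pack (feta G)) (pack ep) (id1 (fob G)).
  rewrite_chain tri_u; drop_idc; reflexivity.
Qed.

Lemma mate_mu (Y X : E) :
  vc ⟪mate (mten Y X)⟫ (whisker IF (pack (fmu F Y X)) u)
  = vc (whisker u (pack (fmu G Y X)) IG)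
      (vc (whisker IF (pack (mate Y)) (B X)) (whisker (A Y) (pack (mate X)) IG)).
Proof.
  unfold_mate.
  slide (pack et) (pack (fmu F Y X)) (id1 (fob F)).
  whisker_in (tsig_mu_cells T Y X) u u C; rewrite_chain_rev C.
  slide (pack (fmu G Y X)) (pack ep) (id1 (fob G)).
  on_rhs ltac:(slide (pack et) (pack ep) (comp1 (A Y) (comp1 u (B X)))).
  on_rhs ltac:(slide (pack et) (pack (s X)) (comp1 (A Y) u)).
  on_rhs ltac:(slide (pack et) (pack et) (A Y)).
  on_rhs ltac:(slide (pack (s Y)) (pack ep) (comp1 u (B X))).
  on_rhs ltac:(slide (pack (s Y)) (pack (s X)) u).
  on_rhs ltac:(slide (pack (s Y)) (pack et) (id1 (fob F))).
  on_rhs ltac:(slide (pack ep) (pack ep) (B X)).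
  on_rhs ltac:(slide (pack ep) (pack (s X)) (id1 (fob G))).
  whisker_in tri_M (comp1 u (B Y)) (comp1 (A X) u) C2; rewrite_chain C2; drop_idc.
  reflexivity.
Qed.

Context (hF : is_pseudo F) (hG : is_pseudo G).

Lemma mate_dual_counit (Y X : E) (ev : mhom (mten Y X) munit) :
  vc (whisker u (pack (dual_counit hG ev)) IG)
    (vc (whisker IF (pack (mate Y)) (B X)) (whisker (A Y) (pack (mate X)) IG))
  = whisker IF (pack (dual_counit hF ev)) u.
Proof.
  unfold dual_counit; expand_cells.
  rewrite_chain_rev (mate_mu Y X).
  rewrite_chain (mate_nat ev).
  pose proof mate_eta as H.
  compose_after H (whisker u (pack (feta_inv hG)) (id1 (fob G))).
  whisker_in (feta_inv_cancel_l hG) u (id1 (fob G)) C; rewrite_chain_in H C; drop_idc_in H.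
  compose_before H (whisker (id1 (fob F)) (pack (feta_inv hF)) u).
  whisker_in (feta_inv_cancel_r hF) (id1 (fob F)) u C'; rewrite_chain_in H C'; drop_idc_in H.
  rewrite_chain H; reflexivity.
Qed.

Lemma mate_dual_unit (Y X : E) (coev : mhom munit (mten X Y)) :
  vc (whisker IF (pack (mate X)) (B Y))
    (vc (whisker (A X) (pack (mate Y)) IG) (whisker IF (pack (dual_unit hF coev)) u))
  = whisker u (pack (dual_unit hG coev)) IG.
Proof.
  unfold dual_unit; expand_cells.
  pose proof (mate_mu X Y) as H.
  compose_after H (whisker u (pack (fmu_inv hG X Y)) (id1 (fob G))).
  whisker_in (fmu_inv_cancel_l hG X Y) u (id1 (fob G)) C; rewrite_chain_in H C; drop_idc_in H.
  compose_before H (whisker (id1 (fob F)) (pack (fmu_inv hF X Y)) u).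
  whisker_in (fmu_inv_cancel_r hF X Y) (id1 (fob F)) u C'; rewrite_chain_in H C'; drop_idc_in H.
  rewrite_chain_rev H.
  rewrite_chain_rev (mate_nat coev).
  rewrite_chain mate_eta; reflexivity.
Qed.

Lemma mate_is_iso2 (Y X : E) (ev : mhom (mten Y X) munit) (coev : mhom munit (mten X Y))
  (snake : mcomp (mrunit X) (mcomp (mtenm (mid X) ev)
      (mcomp (massoc X Y X) (mcomp (mtenm coev (mid X)) (mlunit_inv X)))) = mid X) :
  is_iso2 (mate X).
Proof.
  exact (lax_square_is_iso2 (dual_triangle_r hF snake) (dual_triangle_r hG snake)
           (mate_dual_counit ev) (mate_dual_unit coev)).
Qed.

Context (mate_iso : forall X, is_iso2 (mate X)).

Definition mate_inv (X : E) : c2 (comp1 u (B X)) (comp1 (A X) u) := inv2 (mate_iso X).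

Lemma mate_inv_cancel_l X : vc ⟪mate_inv X⟫ ⟪mate X⟫ = idc (comp1 (A X) u).
Proof. apply inv2_cancel_l. Qed.
Lemma mate_inv_cancel_r X : vc ⟪mate X⟫ ⟪mate_inv X⟫ = idc (comp1 u (B X)).
Proof. apply inv2_cancel_r. Qed.

Lemma mate_inv_nat {X X' : E} (f : mhom X X') :
  vc (whisker IF (pack (f2 F f)) u) ⟪mate_inv X⟫
  = vc ⟪mate_inv X'⟫ (whisker u (pack (f2 G f)) IG).
Proof.
  pose proof (mate_nat f) as H.
  compose_after H ⟪mate_inv X'⟫; rewrite_chain_in H (mate_inv_cancel_l X'); drop_idc_in H.
  compose_before H ⟪mate_inv X⟫; rewrite_chain_in H (mate_inv_cancel_r X); drop_idc_in H.
  symmetry; exact H.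
Qed.

Lemma mate_inv_mu (Y X : E) :
  vc (whisker IF (pack (fmu F Y X)) u)
    (vc (whisker (A Y) (pack (mate_inv X)) IG) (whisker IF (pack (mate_inv Y)) (B X)))
  = vc ⟪mate_inv (mten Y X)⟫ (whisker u (pack (fmu G Y X)) IG).
Proof.
  pose proof (mate_mu Y X) as H.
  compose_after H ⟪mate_inv (mten Y X)⟫.
  rewrite_chain_in H (mate_inv_cancel_l (mten Y X)); drop_idc_in H.
  compose_before H (whisker (A Y) (pack (mate_inv X)) IG).
  whisker_in (mate_inv_cancel_r X) (A Y) (id1 (fob G)) C; rewrite_chain_in H C; drop_idc_in H.
  compose_before H (whisker IF (pack (mate_inv Y)) (B X)).
  whisker_in (mate_inv_cancel_r Y) (id1 (fob F)) (B X) C'; rewrite_chain_in H C'; drop_idc_in H.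
  exact H.
Qed.

Lemma mate_inv_eta :
  vc ⟪mate_inv munit⟫ (whisker u (pack (feta G)) IG) = whisker IF (pack (feta F)) u.
Proof.
  pose proof mate_eta as H.
  compose_after H ⟪mate_inv munit⟫; rewrite_chain_in H (mate_inv_cancel_l munit); drop_idc_in H.
  symmetry; exact H.
Qed.

Definition left_adjoint_trans : ColaxTrans G F :=
  colax_of_cells (N := u) (@mate_inv_nat) mate_inv_mu mate_inv_eta.

Lemma mate_inv_unit (X : E) :
  whisker (A X) (pack et) IF
  = vc (whisker IF (pack (mate_inv X)) M)
      (vc (whisker u (pack (s X)) IF) (whisker IF (pack et) (A X))).
Proof.
  assert (Hmate : vc (whisker u (pack (s X)) IF) (whisker IF (pack et) (A X))
                  = vc (whisker IF (pack (mate X)) M) (whisker (A X) (pack et) IF)).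
  { unfold_mate.
    on_rhs ltac:(slide (pack et) (pack et) (A X)).
    on_rhs ltac:(slide (pack (s X)) (pack et) (id1 (fob F))).
    whisker_in tri_M (comp1 u (B X)) (id1 (fob F)) C; on_rhs ltac:(rewrite_chain C); drop_idc.
    reflexivity. }
  rewrite_chain Hmate.
  whisker_in (mate_inv_cancel_l X) (id1 (fob F)) (tM T) C; rewrite_chain C; drop_idc.
  reflexivity.
Qed.

Lemma mate_inv_counit (X : E) :
  vc (whisker (B X) (pack ep) IG)
    (vc (whisker IG (pack (s X)) u) (whisker M (pack (mate_inv X)) IG))
  = whisker IG (pack ep) (B X).
Proof.
  assert (Hmate : vc (whisker (B X) (pack ep) IG) (whisker IG (pack (s X)) u)
                  = vc (whisker IG (pack ep) (B X)) (whisker M (pack (mate X)) IG)).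
  { unfold_mate.
    on_rhs ltac:(slide (pack ep) (pack ep) (B X)).
    on_rhs ltac:(slide (pack ep) (pack (s X)) (id1 (fob G))).
    whisker_in tri_M (id1 (fob G)) (comp1 (A X) u) C; on_rhs ltac:(rewrite_chain C); drop_idc.
    reflexivity. }
  rewrite_chain Hmate.
  whisker_in (mate_inv_cancel_r X) (tM T) (id1 (fob G)) C; rewrite_chain C; drop_idc.
  reflexivity.
Qed.

Lemma left_adjoint_trans_spec (Htri : triangles et ep) : is_left_adjoint_Z T left_adjoint_trans.
Proof.
  exact (is_left_adjoint_Z_of_cells (U := left_adjoint_trans) mate_inv_unit mate_inv_counit Htri).
Qed.

End LeftAdjoint.

Section RightAdjoint.
Context {E : MonCat} {K : TwoCat} {F G : LaxFunctor E K} (T : ColaxTrans F G).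
Local Notation A := (f1 F).
Local Notation B := (f1 G).
Local Notation M := (tM T).
Local Notation s := (tsig T).
Local Notation IF := (id1 (fob F)).
Local Notation IG := (id1 (fob G)).
Context (u : c1 (fob G) (fob F)) (et : c2 IG (comp1 M u)) (ep : c2 (comp1 u M) IF)
  (tri_u : vc (whisker IF (pack ep) u) (whisker u (pack et) IG) = idc u)
  (tri_M : vc (whisker M (pack ep) IF) (whisker IG (pack et) M) = idc M).
Context (tsig_iso : forall X, is_iso2 (s X)).

Definition tsig_inv (X : E) : c2 (comp1 (B X) M) (comp1 M (A X)) := inv2 (tsig_iso X).

Lemma tsig_inv_cancel_l X : vc ⟪tsig_inv X⟫ ⟪s X⟫ = idc (comp1 M (A X)).
Proof. apply inv2_cancel_l. Qed.
Lemma tsig_inv_cancel_r X : vc ⟪s X⟫ ⟪tsig_inv X⟫ = idc (comp1 (B X) M).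
Proof. apply inv2_cancel_r. Qed.

Lemma tsig_inv_nat {X X' : E} (f : mhom X X') :
  vc (whisker M (pack (f2 F f)) IF) ⟪tsig_inv X⟫
  = vc ⟪tsig_inv X'⟫ (whisker IG (pack (f2 G f)) M).
Proof.
  pose proof (tsig_nat_cells T f) as H.
  compose_after H ⟪tsig_inv X'⟫; rewrite_chain_in H (tsig_inv_cancel_l X'); drop_idc_in H.
  compose_before H ⟪tsig_inv X⟫; rewrite_chain_in H (tsig_inv_cancel_r X); drop_idc_in H.
  symmetry; exact H.
Qed.

Lemma tsig_inv_mu (Y X : E) :
  vc ⟪tsig_inv (mten Y X)⟫ (whisker IG (pack (fmu G Y X)) M)
  = vc (whisker M (pack (fmu F Y X)) IF)
      (vc (whisker IG (pack (tsig_inv Y)) (A X)) (whisker (B Y) (pack (tsig_inv X)) IF)).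
Proof.
  pose proof (tsig_mu_cells T Y X) as H.
  compose_after H ⟪tsig_inv (mten Y X)⟫.
  rewrite_chain_in H (tsig_inv_cancel_l (mten Y X)); drop_idc_in H.
  compose_before H (whisker IG (pack (tsig_inv Y)) (A X)).
  whisker_in (tsig_inv_cancel_r Y) (id1 (fob G)) (A X) C; rewrite_chain_in H C; drop_idc_in H.
  compose_before H (whisker (B Y) (pack (tsig_inv X)) IF).
  whisker_in (tsig_inv_cancel_r X) (B Y) (id1 (fob F)) C'; rewrite_chain_in H C'; drop_idc_in H.
  exact H.
Qed.

Lemma tsig_inv_eta :
  vc ⟪tsig_inv munit⟫ (whisker IG (pack (feta G)) M) = whisker M (pack (feta F)) IF.
Proof.
  pose proof (tsig_eta_cells T) as H.
  compose_after H ⟪tsig_inv munit⟫; rewrite_chain_in H (tsig_inv_cancel_l munit); drop_idc_in H.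
  symmetry; exact H.
Qed.

Definition inv_mate_cell (X : E) : cell (fob G) (fob F) :=
  vc (whisker IF (pack ep) (comp1 (A X) u))
    (vc (whisker u (pack (tsig_inv X)) u) (whisker (comp1 u (B X)) (pack et) IG)).

Lemma typed_inv_mate_cell (X : E) : typed (inv_mate_cell X) (comp1 u (B X)) (comp1 (A X) u).
Proof. unfold inv_mate_cell; solve_typed. Qed.

Definition inv_mate (X : E) : c2 (comp1 u (B X)) (comp1 (A X) u) := cell2 (typed_inv_mate_cell X).

Lemma pack_inv_mate (X : E) : pack (inv_mate X) = inv_mate_cell X.
Proof. apply pack_cell2. Qed.

Ltac unfold_inv_mate := rewrite ?pack_inv_mate; unfold inv_mate_cell; flatten_cells.

Lemma inv_mate_nat {X X' : E} (f : mhom X X') :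
  vc (whisker IF (pack (f2 F f)) u) ⟪inv_mate X⟫
  = vc ⟪inv_mate X'⟫ (whisker u (pack (f2 G f)) IG).
Proof.
  unfold_inv_mate.
  on_lhs ltac:(slide (pack ep) (pack (f2 F f)) (id1 (fob F))).
  whisker_in (tsig_inv_nat f) u u C; on_lhs ltac:(rewrite_chain C).
  on_lhs ltac:(slide (pack (f2 G f)) (pack et) (id1 (fob G))).
  reflexivity.
Qed.

Lemma inv_mate_eta :
  vc ⟪inv_mate munit⟫ (whisker u (pack (feta G)) IG) = whisker IF (pack (feta F)) u.
Proof.
  unfold_inv_mate.
  slide (pack (feta G)) (pack et) (id1 (fob G)).
  whisker_in tsig_inv_eta u u C; rewrite_chain C.
  slide (pack ep) (pack (feta F)) (id1 (fob F)).
  rewrite_chain tri_u; drop_idc; reflexivity.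
Qed.

Lemma inv_mate_mu (Y X : E) :
  vc (whisker IF (pack (fmu F Y X)) u)
    (vc (whisker (A Y) (pack (inv_mate X)) IG) (whisker IF (pack (inv_mate Y)) (B X)))
  = vc ⟪inv_mate (mten Y X)⟫ (whisker u (pack (fmu G Y X)) IG).
Proof.
  unfold_inv_mate.
  on_rhs ltac:(slide (pack (fmu G Y X)) (pack et) (id1 (fob G))).
  whisker_in (tsig_inv_mu Y X) u u C; on_rhs ltac:(rewrite_chain C).
  on_rhs ltac:(slide (pack ep) (pack (fmu F Y X)) (id1 (fob F))).
  on_lhs ltac:(slide (pack ep) (pack et) (comp1 (A Y) (comp1 u (B X)))).
  on_lhs ltac:(slide (pack (tsig_inv Y)) (pack et) (comp1 u (B X))).
  on_lhs ltac:(slide (pack et) (pack et) (B X)).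
  on_lhs ltac:(slide (pack ep) (pack (tsig_inv X)) (comp1 (A Y) u)).
  on_lhs ltac:(slide (pack (tsig_inv Y)) (pack (tsig_inv X)) u).
  on_lhs ltac:(slide (pack et) (pack (tsig_inv X)) (id1 (fob G))).
  on_lhs ltac:(slide (pack ep) (pack ep) (A Y)).
  on_lhs ltac:(slide (pack (tsig_inv Y)) (pack ep) (id1 (fob F))).
  whisker_in tri_M (comp1 u (B Y)) (comp1 (A X) u) C2; on_lhs ltac:(rewrite_chain C2); drop_idc.
  reflexivity.
Qed.

Definition right_adjoint_trans : ColaxTrans G F :=
  colax_of_cells (N := u) (@inv_mate_nat) inv_mate_mu inv_mate_eta.

Lemma inv_mate_unit (X : E) :
  whisker (B X) (pack et) IG
  = vc (whisker IG (pack (s X)) u)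
      (vc (whisker M (pack (inv_mate X)) IG) (whisker IG (pack et) (B X))).
Proof.
  unfold_inv_mate.
  on_rhs ltac:(slide (pack et) (pack et) (B X)).
  on_rhs ltac:(slide (pack et) (pack (tsig_inv X)) (id1 (fob G))).
  whisker_in tri_M (id1 (fob G)) (comp1 (A X) u) C; on_rhs ltac:(rewrite_chain C); drop_idc.
  whisker_in (tsig_inv_cancel_r X) (id1 (fob G)) u C'; on_rhs ltac:(rewrite_chain C'); drop_idc.
  reflexivity.
Qed.

Lemma inv_mate_counit (X : E) :
  vc (whisker (A X) (pack ep) IF)
    (vc (whisker IF (pack (inv_mate X)) M) (whisker u (pack (s X)) IF))
  = whisker IF (pack ep) (A X).
Proof.
  unfold_inv_mate.
  slide (pack ep) (pack ep) (A X).
  slide (pack (tsig_inv X)) (pack ep) (id1 (fob F)).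
  whisker_in tri_M (comp1 u (B X)) (id1 (fob F)) C; rewrite_chain C; drop_idc.
  whisker_in (tsig_inv_cancel_l X) u (id1 (fob F)) C'; rewrite_chain C'; drop_idc.
  reflexivity.
Qed.

Lemma right_adjoint_trans_spec (Htri : triangles et ep) : is_left_adjoint_Z right_adjoint_trans T.
Proof.
  exact (is_left_adjoint_Z_of_cells (T := right_adjoint_trans) inv_mate_unit inv_mate_counit Htri).
Qed.

End RightAdjoint.

Theorem proposition3p15 (E : MonCat) (K : TwoCat)
  (hE : mon_autonomous E) (hK : twocat_autonomous K)
  (F G : LaxFunctor E K) (hF : is_pseudo F) (hG : is_pseudo G)
  (T : ColaxTrans F G) :
  (exists U : ColaxTrans G F, is_left_adjoint_Z T U)
  /\ (exists U : ColaxTrans G F, is_left_adjoint_Z U T).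
Proof.
  split.
  - destruct (proj1 (hK _ _ (tM T))) as [u [et [ep Htri]]].
    destruct (triangles_cells Htri) as [tri_M tri_u].
    assert (mate_iso : forall X, is_iso2 (mate et ep X)).
    { intro X; destruct (proj1 (hE X)) as [Y [ev [coev [_ snake]]]].
      exact (mate_is_iso2 tri_M tri_u hF hG snake). }
    exists (left_adjoint_trans tri_M tri_u mate_iso).
    exact (left_adjoint_trans_spec tri_M tri_u mate_iso Htri).
  - destruct (proj2 (hK _ _ (tM T))) as [u [et [ep Htri]]].
    destruct (triangles_cells Htri) as [tri_u tri_M].
    assert (tsig_iso : forall X, is_iso2 (tsig T X)).
    { intro X; destruct (proj2 (hE X)) as [Z [ev [coev [snake _]]]].
      exact (tsig_is_iso2 T hF hG snake). }
    exists (right_adjoint_trans tri_u tri_M tsig_iso).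
    exact (right_adjoint_trans_spec tri_u tri_M tsig_iso Htri).
Qed.
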